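(* The groups $A_3$ and $C_3$ act freely (i.e. without fixed points) on $X_\Gamma$.
   Context: Let $\Gamma=\Gamma(2)\cap\Gamma_1(7)\subseteq\mathrm{SL}_2(\mathbb{Z})$, where $\Gamma_1(7)=\{\begin{pmatrix}a&b\\c&d\end{pmatrix}\in\mathrm{SL}_2(\mathbb{Z}): c\equiv0,\ a\equiv d\equiv1 \pmod 7\}$, and let $X_\Gamma=\Gamma\backslash(\mathfrak{H}\cup\mathbb{P}^1(\mathbb{Q}))$ be the compactified modular curve. Let $\Gamma_*(2)$ be the set of $\gamma\in\mathrm{SL}_2(\mathbb{Z})$ with $\gamma\equiv\begin{pmatrix}1&0\\0&1\end{pmatrix},\begin{pmatrix}1&1\\1&0\end{pmatrix}$ or $\begin{pmatrix}0&1\\1&1\end{pmatrix}\pmod 2$ (the unique subgroup containing $\Gamma(2)$ with index $3$), and $\Gamma_*(7)=\{\begin{pmatrix}a&b\\c&d\end{pmatrix}\in\mathrm{SL}_2(\mathbb{Z}): c\equiv0 \pmod 7,\ a,d\equiv 1,2,\text{ or }4\pmod 7\}$. Then $\Gamma$ is normal in $\Gamma_*(2)\cap\Gamma_*(7)$, and the group $(\Gamma_*(2)\cap\Gamma_*(7))/\Gamma\cong C_3\times C_3$ acts on $X_\Gamma$. Define $A_3=(\Gamma_*(2)\cap\Gamma_1(7))/\Gamma$ and $C_3=(\Gamma(2)\cap\Gamma_*(7))/\Gamma$, two subgroups of order $3$. *)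

From Stdlib Require Import Reals ZArith List.
Open Scope Z_scope.

(** 2x2 integer matrices [[a b];[c d]]. *)
Record mat := Mat { ma : Z; mb : Z; mc : Z; md : Z }.

Definition SL2 (m : mat) : Prop := ma m * md m - mb m * mc m = 1.

Definition congr (n a b : Z) : Prop := a mod n = b mod n.

Definition cond_Gamma2 (m : mat) : Prop :=
  congr 2 (ma m) 1 /\ congr 2 (mb m) 0 /\ congr 2 (mc m) 0 /\ congr 2 (md m) 1.

Definition cond_Gamma_star2 (m : mat) : Prop :=
  cond_Gamma2 m
  \/ (congr 2 (ma m) 1 /\ congr 2 (mb m) 1 /\ congr 2 (mc m) 1 /\ congr 2 (md m) 0)
  \/ (congr 2 (ma m) 0 /\ congr 2 (mb m) 1 /\ congr 2 (mc m) 1 /\ congr 2 (md m) 1).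

Definition cond_Gamma1_7 (m : mat) : Prop :=
  congr 7 (mc m) 0 /\ congr 7 (ma m) 1 /\ congr 7 (md m) 1.

Definition cond_Gamma_star7 (m : mat) : Prop :=
  congr 7 (mc m) 0 /\ In (ma m mod 7) (1 :: 2 :: 4 :: nil)
  /\ In (md m mod 7) (1 :: 2 :: 4 :: nil).

Definition inGamma (m : mat) : Prop := SL2 m /\ cond_Gamma2 m /\ cond_Gamma1_7 m.
(** Gamma_*(2) /\ Gamma_1(7); its quotient by Gamma is A_3. *)
Definition inA3 (m : mat) : Prop := SL2 m /\ cond_Gamma_star2 m /\ cond_Gamma1_7 m.
(** Gamma(2) /\ Gamma_*(7); its quotient by Gamma is C_3. *)
Definition inC3 (m : mat) : Prop := SL2 m /\ cond_Gamma2 m /\ cond_Gamma_star7 m.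

(** Points of H u P^1(Q): [HP x y] is tau = x + i y (needs y > 0);
    [CP p q] is the cusp [p : q] (needs (p,q) <> (0,0)). *)
Inductive pt := HP (x y : R) | CP (p q : Z).

Definition valid_pt (t : pt) : Prop :=
  match t with
  | HP _ y => (0 < y)%R
  | CP p q => ~ (p = 0 /\ q = 0)
  end.

Definition pt_eq (s t : pt) : Prop :=
  match s, t with
  | HP x y, HP x' y' => x = x' /\ y = y'
  | CP p q, CP p' q' => p * q' = p' * q
  | _, _ => False
  end.

(** Moebius action tau |-> (a tau + b)/(c tau + d), written in real coordinates. *)
Definition act (g : mat) (t : pt) : pt :=
  match t with
  | HP x y =>
      let a := IZR (ma g) in let b := IZR (mb g) in
      let c := IZR (mc g) in let d := IZR (md g) in
      let den := ((c * x + d) ^ 2 + (c * y) ^ 2)%R in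
      HP ((a * c * (x ^ 2 + y ^ 2) + (a * d + b * c) * x + b * d) / den)%R
         ((a * d - b * c) * y / den)%R
  | CP p q => CP (ma g * p + mb g * q) (mc g * p + md g * q)
  end.

(** The group G/Gamma (G a group containing Gamma as a normal subgroup) acts
    freely on X_Gamma = Gamma \ (H u P^1(Q)): no non-identity coset g Gamma
    fixes any point Gamma tau, i.e. g tau is never Gamma-equivalent to tau. *)
Definition acts_freely_on_XGamma (G : mat -> Prop) : Prop :=
  forall g, G g -> ~ inGamma g ->
  forall t, valid_pt t ->
  ~ (exists gam, inGamma gam /\ pt_eq (act g t) (act gam t)).

(* If [g t] and [gamma t] are Gamma-equivalent, then [h = gamma^-1 g] fixes a point of
   H u P^1(Q), so [|tr h| <= 2]: a non-real fixed point is a root of a real quadratic of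
   discriminant [tr h^2 - 4], which must be nonpositive, and a rational fixed point yields
   a primitive integral eigenvector, whose eigenvalue divides [det h = 1] and so is [+-1].
   As [gamma] is congruent to [[1 *];[0 1]] modulo 2 and 7, [tr h] is congruent to [tr g]
   modulo 2 and 7.  Outside Gamma, [tr g] is odd and 2 mod 7 in the case of A_3, and even
   and 6 mod 7 in the case of C_3; no integer in [-2, 2] is either. *)
From Stdlib Require Import Reals ZArith List Lia Lra.
Open Scope Z_scope.

Definition mat_mul (g h : mat) : mat :=
  Mat (ma g * ma h + mb g * mc h) (ma g * mb h + mb g * md h)
      (mc g * ma h + md g * mc h) (mc g * mb h + md g * md h).

Definition mat_adj (g : mat) : mat := Mat (md g) (- mb g) (- mc g) (ma g).

Definition mat_tr (g : mat) : Z := ma g + md g.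

Lemma SL2_mul g h : SL2 g -> SL2 h -> SL2 (mat_mul g h).
Proof.
  unfold SL2, mat_mul; cbn; intros Hg Hh.
  transitivity ((ma g * md g - mb g * mc g) * (ma h * md h - mb h * mc h)); [ring|].
  rewrite Hg, Hh; ring.
Qed.

Lemma SL2_adj g : SL2 g -> SL2 (mat_adj g).
Proof. unfold SL2, mat_adj; cbn; lia. Qed.

(* [fixes h t]: [t] is a root of [c t^2 + (d - a) t - b], i.e. a fixed point of
   [h = [[a b];[c d]]]; for [t = x + i y] we record the real and imaginary parts. *)
Definition fixes (h : mat) (t : pt) : Prop :=
  match t with
  | HP x y =>
      let a := IZR (ma h) in let b := IZR (mb h) in
      let c := IZR (mc h) in let d := IZR (md h) in
      (c * (x ^ 2 - y ^ 2) + (d - a) * x - b = 0)%R /\ ((2 * c * x + (d - a)) * y = 0)%R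
  | CP _ _ => pt_eq (act h t) t
  end.

Lemma mobius_den_pos (c d x y : R) :
  (0 < y)%R -> c <> 0%R \/ d <> 0%R -> (0 < (c * x + d) ^ 2 + (c * y) ^ 2)%R.
Proof.
  intros Hy Hcd.
  destruct (Req_dec c 0) as [-> | Hc].
  - destruct Hcd as [|Hd]; [lra|]. pose proof (Rsqr_pos_lt d Hd). unfold Rsqr in *. nra.
  - assert (0 < c * c * (y * y))%R.
    { apply Rmult_lt_0_compat; [apply (Rsqr_pos_lt c Hc) | nra]. }
    pose proof (pow2_ge_0 (c * x + d)). simpl in *. nra.
Qed.

(* [X + i Y = (a t + b) / (c t + d)], cleared of the denominator. *)
Lemma act_HP_coords g x y X Y :
  SL2 g -> (0 < y)%R -> act g (HP x y) = HP X Y ->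
  (IZR (ma g) * x + IZR (mb g) = X * (IZR (mc g) * x + IZR (md g)) - Y * (IZR (mc g) * y))%R /\
  (IZR (ma g) * y = X * (IZR (mc g) * y) + Y * (IZR (mc g) * x + IZR (md g)))%R.
Proof.
  intros Hg Hy E; injection E as <- <-.
  assert (Hden : ((IZR (mc g) * x + IZR (md g)) ^ 2 + (IZR (mc g) * y) ^ 2 <> 0)%R).
  { apply Rgt_not_eq, mobius_den_pos; [exact Hy|].
    destruct (Z.eq_dec (mc g) 0) as [Ec | Ec]; [right | left]; apply not_0_IZR; [|exact Ec].
    intros Ed; unfold SL2 in Hg; rewrite Ec, Ed in Hg; lia. }
  split; field; simpl in Hden; lra.
Qed.

(* Both [g] and [g'] send [t] to [w]: then [(a t + b)(c' t + d') = (a' t + b')(c t + d)]. *)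
Lemma mobius_common_image (a b c d a' b' c' d' x y X Y : R) :
  (a * x + b = X * (c * x + d) - Y * (c * y))%R -> (a * y = X * (c * y) + Y * (c * x + d))%R ->
  (a' * x + b' = X * (c' * x + d') - Y * (c' * y))%R ->
  (a' * y = X * (c' * y) + Y * (c' * x + d'))%R ->
  ((a * c' - a' * c) * (x ^ 2 - y ^ 2) + (a * d' + b * c' - a' * d - b' * c) * x
     + (b * d' - b' * d) = 0)%R /\
  ((2 * (a * c' - a' * c) * x + (a * d' + b * c' - a' * d - b' * c)) * y = 0)%R.
Proof.
  intros E1 E2 E3 E4; split.
  - transitivity ((a * x + b) * (c' * x + d') - (a * y) * (c' * y)
                  - ((a' * x + b') * (c * x + d) - (a' * y) * (c * y)))%R; [ring|].
    rewrite E1, E2, E3, E4; ring.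
  - transitivity ((a * x + b) * (c' * y) + (a * y) * (c' * x + d')
                  - ((a' * x + b') * (c * y) + (a' * y) * (c * x + d)))%R; [ring|].
    rewrite E1, E2, E3, E4; ring.
Qed.

Lemma fixes_adj_mul g g' t :
  SL2 g -> SL2 g' -> valid_pt t -> pt_eq (act g t) (act g' t) ->
  fixes (mat_mul (mat_adj g') g) t.
Proof.
  intros Hg Hg' Ht E; destruct t as [x y | p q]; cbn [valid_pt fixes] in *.
  - destruct (act g (HP x y)) as [X Y | ] eqn:Eg; [| discriminate].
    destruct (act g' (HP x y)) as [X' Y' | ] eqn:Eg'; [| discriminate].
    destruct E as [<- <-].
    destruct (act_HP_coords g x y X Y Hg Ht Eg) as [E1 E2].
    destruct (act_HP_coords g' x y X Y Hg' Ht Eg') as [E3 E4].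
    destruct (mobius_common_image _ _ _ _ _ _ _ _ _ _ _ _ E1 E2 E3 E4) as [Re Im].
    cbn [mat_mul mat_adj ma mb mc md]. rewrite ?plus_IZR, ?mult_IZR, ?opp_IZR.
    split; lra.
  - cbn in *; lia.
Qed.

Lemma quadratic_nonreal_root_discr (A B C x y : R) :
  (0 < y)%R -> (A * (x ^ 2 - y ^ 2) + B * x + C = 0)%R -> ((2 * A * x + B) * y = 0)%R ->
  (B ^ 2 - 4 * A * C <= 0)%R.
Proof.
  intros Hy Re Im.
  assert (HB : B = (- 2 * A * x)%R).
  { apply Rmult_integral in Im as [Im | Im]; lra. }
  assert (HC : C = (A * (x ^ 2 + y ^ 2))%R) by (subst B; lra).
  rewrite HC, HB.
  replace ((- 2 * A * x) ^ 2 - 4 * A * (A * (x ^ 2 + y ^ 2)))%R with (- 4 * (A * y) ^ 2)%R by ring.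
  pose proof (pow2_ge_0 (A * y)). lra.
Qed.

Lemma trace_sq_le_of_fixes_HP h x y :
  SL2 h -> (0 < y)%R -> fixes h (HP x y) -> mat_tr h * mat_tr h <= 4.
Proof.
  unfold SL2, mat_tr, fixes; cbv zeta; intros Hh Hy [Re Im].
  assert (D : ((IZR (md h) - IZR (ma h)) ^ 2 - 4 * IZR (mc h) * - IZR (mb h) <= 0)%R)
    by (apply quadratic_nonreal_root_discr with x y; lra).
  apply (f_equal IZR) in Hh; rewrite minus_IZR, !mult_IZR in Hh.
  apply le_IZR; rewrite mult_IZR, plus_IZR; simpl in D; lra.
Qed.

Lemma parallel_primitive_multiple p q P Q :
  Z.gcd p q = 1 -> P * q = p * Q -> exists l, P = l * p /\ Q = l * q.
Proof.
  intros Hpq E.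
  destruct (Z.gcd_bezout p q 1 Hpq) as [u [w Huw]].
  exists (u * P + w * Q); split.
  - transitivity (P * (u * p + w * q)); [rewrite Huw; ring|].
    transitivity (u * P * p + w * (P * q)); [ring|]. rewrite E; ring.
  - transitivity (Q * (u * p + w * q)); [rewrite Huw; ring|].
    transitivity (u * (p * Q) + w * Q * q); [ring|]. rewrite <- E; ring.
Qed.

Lemma primitive_decomposition p q :
  ~ (p = 0 /\ q = 0) ->
  exists k p0 q0, k <> 0 /\ p = k * p0 /\ q = k * q0 /\ Z.gcd p0 q0 = 1.
Proof.
  intros Hpq.
  assert (Hk : Z.gcd p q <> 0) by (rewrite Z.gcd_eq_0; tauto).
  pose proof (Z.gcd_div_gcd p q _ Hk eq_refl) as Hprim.
  destruct (Z.gcd_divide_l p q) as [p0 Hp], (Z.gcd_divide_r p q) as [q0 Hq].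
  set (k := Z.gcd p q) in *.
  exists k, p0, q0; repeat split; [exact Hk | lia | lia |].
  rewrite Hp, Hq, !Z.div_mul in Hprim; assumption.
Qed.

Lemma eigenvalue_char_eq h l p q :
  ~ (p = 0 /\ q = 0) -> ma h * p + mb h * q = l * p -> mc h * p + md h * q = l * q ->
  l * l - mat_tr h * l + (ma h * md h - mb h * mc h) = 0.
Proof.
  unfold mat_tr; intros Hpq E1 E2.
  assert (Ep : (l * l - (ma h + md h) * l + (ma h * md h - mb h * mc h)) * p = 0).
  { transitivity ((md h - l) * (ma h * p + mb h * q - l * p) - mb h * (mc h * p + md h * q - l * q));
      [ring | rewrite E1, E2; ring]. }
  assert (Eq : (l * l - (ma h + md h) * l + (ma h * md h - mb h * mc h)) * q = 0).
  { transitivity ((ma h - l) * (mc h * p + md h * q - l * q) - mc h * (ma h * p + mb h * q - l * p));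
      [ring | rewrite E1, E2; ring]. }
  apply Z.mul_eq_0 in Ep, Eq; tauto.
Qed.

Lemma trace_sq_of_fixes_CP h p q :
  SL2 h -> ~ (p = 0 /\ q = 0) -> fixes h (CP p q) -> mat_tr h * mat_tr h = 4.
Proof.
  unfold SL2; cbn; intros Hh Hpq E.
  destruct (primitive_decomposition p q Hpq) as (k & p0 & q0 & Hk & -> & -> & Hpq0).
  assert (E0 : (ma h * p0 + mb h * q0) * q0 = p0 * (mc h * p0 + md h * q0)).
  { apply (Z.mul_cancel_l _ _ (k * k)); [lia|].
    transitivity ((ma h * (k * p0) + mb h * (k * q0)) * (k * q0)); [ring|].
    rewrite E; ring. }
  destruct (parallel_primitive_multiple _ _ _ _ Hpq0 E0) as (l & E1 & E2).
  assert (Hpq0' : ~ (p0 = 0 /\ q0 = 0)) by (intros [-> ->]; discriminate).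
  pose proof (eigenvalue_char_eq h l p0 q0 Hpq0' E1 E2) as Hchar.
  rewrite Hh in Hchar.
  assert (Hl : l * (mat_tr h - l) = 1) by lia.
  apply Z.eq_mul_1 in Hl; destruct Hl as [-> | ->]; nia.
Qed.

Lemma trace_bound_of_common_image g g' t :
  SL2 g -> SL2 g' -> valid_pt t -> pt_eq (act g t) (act g' t) ->
  -2 <= mat_tr (mat_mul (mat_adj g') g) <= 2.
Proof.
  intros Hg Hg' Ht E.
  pose proof (SL2_mul _ _ (SL2_adj _ Hg') Hg) as Hh.
  pose proof (fixes_adj_mul g g' t Hg Hg' Ht E) as Hfix.
  assert (mat_tr (mat_mul (mat_adj g') g) * mat_tr (mat_mul (mat_adj g') g) <= 4).
  { destruct t as [x y | p q].
    - exact (trace_sq_le_of_fixes_HP _ x y Hh Ht Hfix).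
    - rewrite (trace_sq_of_fixes_CP _ p q Hh Ht Hfix); lia. }
  nia.
Qed.

Lemma mat_tr_adj_mul_congr n g g' :
  congr n (ma g') 1 -> congr n (md g') 1 -> congr n (mc g') 0 -> congr n (mb g' * mc g) 0 ->
  congr n (mat_tr (mat_mul (mat_adj g') g)) (mat_tr g).
Proof.
  unfold congr; intros Ha Hd Hc Hbc.
  apply Z.cong_iff_ex in Ha as [ka Ea], Hd as [kd Ed], Hc as [kc Ec], Hbc as [kbc Ebc].
  apply Z.cong_iff_ex; unfold mat_tr, mat_mul, mat_adj; cbn.
  exists (ma g * kd + md g * ka - kbc - kc * mb g).
  transitivity (ma g * (md g' - 1) + md g * (ma g' - 1) - (mb g' * mc g - 0) - (mc g' - 0) * mb g);
    [ring|].
  rewrite Ea, Ed, Ec, Ebc; ring.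
Qed.

Lemma congr_mul_zero_r n x y : congr n x 0 -> congr n (y * x) 0.
Proof.
  unfold congr; rewrite !Z.cong_iff_ex; intros [k E].
  exists (y * k); transitivity (y * (x - 0)); [ring | rewrite E; ring].
Qed.

Lemma mat_tr_Gamma_congr g g' :
  inGamma g' -> congr 7 (mc g) 0 ->
  congr 2 (mat_tr (mat_mul (mat_adj g') g)) (mat_tr g) /\
  congr 7 (mat_tr (mat_mul (mat_adj g') g)) (mat_tr g).
Proof.
  intros (_ & (Ga2 & Gb2 & Gc2 & Gd2) & (Gc7 & Ga7 & Gd7)) Hc7; split.
  - apply mat_tr_adj_mul_congr; try assumption.
    rewrite Z.mul_comm; apply congr_mul_zero_r; exact Gb2.
  - apply mat_tr_adj_mul_congr; try assumption.
    apply congr_mul_zero_r; exact Hc7.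
Qed.

Lemma unit_pairs_mod7 a d :
  In (a mod 7) (1 :: 2 :: 4 :: nil) -> In (d mod 7) (1 :: 2 :: 4 :: nil) ->
  congr 7 (a * d) 1 -> (a mod 7 = 1 /\ d mod 7 = 1) \/ congr 7 (a + d) 6.
Proof.
  unfold congr; intros Ha Hd Had.
  rewrite Z.mul_mod in Had by discriminate; rewrite Z.add_mod by discriminate.
  cbn in Ha, Hd.
  destruct Ha as [Ha | [Ha | [Ha | []]]], Hd as [Hd | [Hd | [Hd | []]]];
    rewrite <- Ha, <- Hd in *; cbn in *; first [now left | now right | discriminate Had].
Qed.

Lemma inA3_small_trace g g' :
  inA3 g -> inGamma g' -> -2 <= mat_tr (mat_mul (mat_adj g') g) <= 2 -> inGamma g.
Proof.
  intros (Hg & H2 & H7) Hg' Ht.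
  pose proof H7 as (Hc7 & Ha7 & Hd7).
  destruct (mat_tr_Gamma_congr g g' Hg' Hc7) as [T2 T7].
  split; [exact Hg | split; [| exact H7]].
  (* Otherwise the trace is odd and 2 mod 7, impossible in [-2, 2]. *)
  destruct H2 as [H2 | [(Ha2 & _ & _ & Hd2) | (Ha2 & _ & _ & Hd2)]]; [exact H2 | exfalso ..];
    revert Ht T2 T7; set (t := mat_tr _); unfold congr, mat_tr in *;
    intros; Z.div_mod_to_equations; lia.
Qed.

Lemma inC3_small_trace g g' :
  inC3 g -> inGamma g' -> -2 <= mat_tr (mat_mul (mat_adj g') g) <= 2 -> inGamma g.
Proof.
  intros (Hg & H2 & Hc7 & Ha7 & Hd7) Hg' Ht.
  pose proof H2 as (Ha2 & _ & _ & Hd2).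
  destruct (mat_tr_Gamma_congr g g' Hg' Hc7) as [T2 T7].
  assert (Hdet : congr 7 (ma g * md g) 1).
  { unfold SL2 in Hg; replace (ma g * md g) with (1 + mb g * mc g) by lia.
    pose proof (congr_mul_zero_r 7 _ (mb g) Hc7) as Hbc.
    unfold congr in *; rewrite Z.add_mod, Hbc by discriminate; reflexivity. }
  destruct (unit_pairs_mod7 _ _ Ha7 Hd7 Hdet) as [[Ha Hd] | T6].
  - split; [exact Hg | split; [exact H2 |]].
    unfold cond_Gamma1_7, congr; rewrite Ha, Hd; auto.
  - (* the trace would be even and 6 mod 7, impossible in [-2, 2] *)
    exfalso; revert Ht T2 T7; set (t := mat_tr _); unfold congr, mat_tr in *;
      intros; Z.div_mod_to_equations; lia.
Qed.

Lemma acts_freely_of_small_trace (G : mat -> Prop) :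
  (forall g, G g -> SL2 g) ->
  (forall g g', G g -> inGamma g' -> -2 <= mat_tr (mat_mul (mat_adj g') g) <= 2 -> inGamma g) ->
  acts_freely_on_XGamma G.
Proof.
  intros HSL Hsmall g Gg Hg t Ht [g' [Hg' E]].
  apply Hg, (Hsmall g g' Gg Hg').
  exact (trace_bound_of_common_image g g' t (HSL g Gg) (proj1 Hg') Ht E).
Qed.

Theorem mainTheorem6 :
  acts_freely_on_XGamma inA3 /\ acts_freely_on_XGamma inC3.
Proof.
  split; apply acts_freely_of_small_trace.
  - intros g Hg; exact (proj1 Hg).
  - exact inA3_small_trace.
  - intros g Hg; exact (proj1 Hg).
  - exact inC3_small_trace.
Qed.
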